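(* Let $(A,B)$ be controllable. For any $N$, any $Q_t\in\mathcal Q$, $R_t\in\mathcal R$ ($0\le t\le N-1$) and $Q_N\in\mathcal P$, the matrices defined by $P_N=Q_N$ and, for $t=N-1,\dots,0$, $P_t=Q_t+A^\top\big(P_{t+1}-P_{t+1}B(R_t+B^\top P_{t+1}B)^{-1}B^\top P_{t+1}\big)A$ satisfy $P_t\in\mathcal P$ for all $0\le t\le N$.
   Context: Fix $\mu_f,\mu_g>0$, $0<l_f,l_g<\infty$. $P^e(Q,R)$ denotes the positive definite solution of the DARE $P=Q+A^\top(P-PB(B^\top PB+R)^{-1}B^\top P)A$. $\mathcal Q=\{Q:\mu_fI_n\le Q\le l_fI_n\}$, $\mathcal R=\{R:\mu_gI_m\le R\le l_gI_m\}$, $\bar P=P^e(l_fI_n,l_gI_m)$, $\underline P=P^e(\mu_fI_n,\mu_gI_m)$, $\mathcal P=\{P:\underline P\le P\le\bar P\}$ (Loewner order). *)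

From HB Require Import structures.
From mathcomp Require Import all_boot all_order all_algebra.
Set Implicit Arguments. Unset Strict Implicit. Unset Printing Implicit Defensive.
Import Order.TTheory GRing.Theory Num.Theory.
Local Open Scope ring_scope.

Section Defs.
Variable R : rcfType.

Definition qform n (M : 'M[R]_n) (x : 'cV[R]_n) : R := (x^T *m M *m x) 0 0.

Definition psd n (M : 'M[R]_n) : Prop :=
  M^T = M /\ forall x : 'cV[R]_n, 0 <= qform M x.

Definition posdef n (M : 'M[R]_n) : Prop :=
  M^T = M /\ forall x : 'cV[R]_n, x != 0 -> 0 < qform M x.

Definition loewner_le n (M1 M2 : 'M[R]_n) : Prop := psd (M2 - M1).

Definition ctrb_mx n m (A : 'M[R]_n) (B : 'M[R]_(n, m)) :
  'M[R]_(n, \sum_(k < n) (fun _ : 'I_n => m) k) :=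
  @mxrow R n (fun _ : 'I_n => m) n (fun k => A ^+ k *m B).

Definition controllable n m (A : 'M[R]_n) (B : 'M[R]_(n, m)) : Prop :=
  \rank (ctrb_mx A B) = n.

Definition riccati n m (A : 'M[R]_n) (B : 'M[R]_(n, m))
  (Q : 'M[R]_n) (Rw : 'M[R]_m) (P : 'M[R]_n) : 'M[R]_n :=
  Q + A^T *m (P - P *m B *m invmx (Rw + B^T *m P *m B) *m B^T *m P) *m A.

Definition dare_sol n m (A : 'M[R]_n) (B : 'M[R]_(n, m))
  (Q : 'M[R]_n) (Rw : 'M[R]_m) (P : 'M[R]_n) : Prop :=
  posdef P /\ P = riccati A B Q Rw P.

Definition in_interval n (lo hi M : 'M[R]_n) : Prop :=
  loewner_le lo M /\ loewner_le M hi.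

End Defs.

From HB Require Import structures.
From mathcomp Require Import all_boot all_order all_algebra.
From mathcomp Require Import ring lra zify.
Import Order.TTheory GRing.Theory Num.Theory.
Set Implicit Arguments. Unset Strict Implicit. Unset Printing Implicit Defensive.
Local Open Scope ring_scope.

(* The Riccati operator
     ric(Q, R, P) = Q + A^T (P - P B (R + B^T P B)^-1 B^T P) A
   is monotone in (Q, R, P) for the Loewner order.  The reason is the
   completing-the-square identity
     (y + B u)^T P (y + B u) + u^T R u
       = y^T (P - P B S^-1 B^T P) y + (u + K y)^T S (u + K y),
   with S = R + B^T P B and K = S^-1 B^T P, which exhibits
     x^T ric(Q, R, P) x = min_u [ x^T Q x + (A x + B u)^T P (A x + B u) + u^T R u ],
   a pointwise minimum of expressions that are monotone in (Q, R, P).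
   Since Plow and Pbar are fixed points of ric for the extreme weights
   (mu_f I, mu_g I) and (l_f I, l_g I), monotonicity shows that one backward
   Riccati step maps the interval [Plow, Pbar] into itself whenever the
   weights Q_t, R_t lie in their intervals; backward induction from P_N = Q_N
   then gives the theorem. *)

Section RiccatiMonotonicity.
Variable R : rcfType.

(* Transposition is additive; these named forms rewrite without exposing
   the additive-function wrapper. *)
Lemma trmxD p q (M N : 'M[R]_(p, q)) : (M + N)^T = M^T + N^T.
Proof. exact: raddfD. Qed.

Lemma trmxB p q (M N : 'M[R]_(p, q)) : (M - N)^T = M^T - N^T.
Proof. exact: raddfB. Qed.

Lemma trmxN p q (M : 'M[R]_(p, q)) : (- M)^T = - M^T.
Proof. exact: raddfN. Qed.

Lemma qformD n (M N : 'M[R]_n) x : qform (M + N) x = qform M x + qform N x.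
Proof. by rewrite /qform mulmxDr mulmxDl mxE. Qed.

Lemma qformN n (M : 'M[R]_n) x : qform (- M) x = - qform M x.
Proof. by rewrite /qform mulmxN mulNmx mxE. Qed.

Lemma qformB n (M N : 'M[R]_n) x : qform (M - N) x = qform M x - qform N x.
Proof. by rewrite qformD qformN. Qed.

Lemma qform0 n (M : 'M[R]_n) : qform M 0 = 0.
Proof. by rewrite /qform mulmx0 mxE. Qed.

Lemma qform_conj n k (A : 'M[R]_(k, n)) (M : 'M_k) x :
  qform (A^T *m M *m A) x = qform M (A *m x).
Proof. by rewrite /qform trmx_mul !mulmxA. Qed.

Lemma sym_of_loewner n (M1 M2 : 'M[R]_n) :
  loewner_le M1 M2 -> M1^T = M1 -> M2^T = M2.
Proof. by move=> [sD _] s1; rewrite -[M2](subrK M1) trmxD sD s1. Qed.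

Lemma psd_loewner n (M1 M2 : 'M[R]_n) : psd M1 -> loewner_le M1 M2 -> psd M2.
Proof.
move=> [s1 p1] le12; split; first exact: sym_of_loewner le12 s1.
by move=> x; have := p1 x; have := le12.2 x; rewrite qformB; lra.
Qed.

Lemma posdef_loewner n (M1 M2 : 'M[R]_n) :
  posdef M1 -> loewner_le M1 M2 -> posdef M2.
Proof.
move=> [s1 p1] le12; split; first exact: sym_of_loewner le12 s1.
by move=> x hx; have := p1 x hx; have := le12.2 x; rewrite qformB; lra.
Qed.

Lemma posdef_psd n (M : 'M[R]_n) : posdef M -> psd M.
Proof.
move=> [s p]; split=> // x; have [->|hx] := eqVneq x 0; first by rewrite qform0.
exact: ltW (p x hx).
Qed.

Lemma psd_conj n k (A : 'M[R]_(k, n)) (M : 'M_k) : psd M -> psd (A^T *m M *m A).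
Proof.
move=> [s p]; split; first by rewrite !trmx_mul trmxK s mulmxA.
by move=> x; rewrite qform_conj.
Qed.

(* A positive multiple of the identity is positive definite:
   x^T (a I) x = a * sum_i x_i^2. *)
Lemma posdef_scalar n (a : R) : 0 < a -> posdef (a%:M : 'M[R]_n).
Proof.
move=> ha; split; first exact: tr_scalar_mx.
move=> x /matrix0Pn [i [j xij]]; rewrite (ord1 j) in xij.
rewrite /qform mul_mx_scalar -scalemxAl mxE; apply: mulr_gt0 => //.
rewrite mxE (bigD1 i) //= !mxE.
have xi_sq : 0 < x i 0 * x i 0 by rewrite -expr2 lt_def sqrf_eq0 xij sqr_ge0.
have rest : 0 <= \sum_(k < n | k != i) (x^T 0 k * x k 0).
  by apply: sumr_ge0 => k _; rewrite mxE -expr2 sqr_ge0.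
lra.
Qed.

(* A positive definite matrix has trivial kernel, hence is invertible. *)
Lemma posdef_unit n (S : 'M[R]_n) : posdef S -> S \in unitmx.
Proof.
move=> [_ pS]; rewrite -row_free_unit -kermx_eq0.
apply/negPn/negP => /matrix0Pn [i [j kij]].
set w := row i (kermx S).
have wS : w *m S = 0 by rewrite /w -row_mul mulmx_ker row0.
have w_nz : w^T != 0 by apply/matrix0Pn; exists j, ord0; rewrite 2!mxE.
by have := pS _ w_nz; rewrite /qform trmxK wS mul0mx mxE ltxx.
Qed.

Section RiccatiStep.
Variables (n m : nat) (A : 'M[R]_n) (B : 'M[R]_(n, m)).

Lemma riccati_denom_posdef (Rw : 'M_m) (P : 'M_n) :
  posdef Rw -> psd P -> posdef (Rw + B^T *m P *m B).
Proof.
move=> pR pP; apply: (posdef_loewner pR).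
by rewrite /loewner_le addrC addKr; apply: psd_conj.
Qed.

Lemma completing_square (P : 'M_n) (Rw : 'M_m) (y : 'cV_n) (u : 'cV_m) :
  P^T = P -> Rw^T = Rw -> (Rw + B^T *m P *m B) \in unitmx ->
  qform P (y + B *m u) + qform Rw u =
  qform (P - P *m B *m invmx (Rw + B^T *m P *m B) *m B^T *m P) y
  + qform (Rw + B^T *m P *m B) (u + invmx (Rw + B^T *m P *m B) *m B^T *m P *m y).
Proof.
move=> sP sR uS.
set S := Rw + B^T *m P *m B.
have sS : S^T = S by rewrite /S trmxD !trmx_mul trmxK sP sR mulmxA.
set Si := invmx S.
have sSi : Si^T = Si by rewrite /Si trmx_inv sS.
have SSi p (X : 'M_(p, m)) : X *m S *m Si = X by rewrite -mulmxA mulmxV ?mulmx1.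
have SiS p (X : 'M_(p, m)) : X *m Si *m S = X by rewrite -mulmxA mulVmx ?mulmx1.
rewrite /qform !trmxD !trmx_mul !trmxK sP sSi.
have defS : S = Rw + B^T *m P *m B by [].
clearbody Si S.
rewrite !mulmxDl !mulmxDr ?mulmxN ?mulNmx !mulmxA !SSi !SiS defS.
rewrite !(mulmxDl, mulmxDr, mulNmx, mulmxN, mulmxA) !mxE.
ring.
Qed.

Lemma riccati_sym (Q : 'M_n) (Rw : 'M_m) (P : 'M_n) :
  Q^T = Q -> Rw^T = Rw -> P^T = P -> (riccati A B Q Rw P)^T = riccati A B Q Rw P.
Proof.
move=> sQ sR sP.
by rewrite /riccati !(trmxD, trmxB, trmxN, trmx_mul, trmxK, trmx_inv,
  sQ, sP, sR, mulmxA).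
Qed.

Section Variational.
Variables (Q : 'M[R]_n) (Rw : 'M[R]_m) (P : 'M[R]_n).
Hypotheses (pR : posdef Rw) (pP : psd P).

Definition step_cost (x : 'cV[R]_n) (u : 'cV[R]_m) : R :=
  qform Q x + qform P (A *m x + B *m u) + qform Rw u.

Let S := Rw + B^T *m P *m B.
Let pS : posdef S := riccati_denom_posdef pR pP.

Lemma riccati_qform_le x u : qform (riccati A B Q Rw P) x <= step_cost x u.
Proof.
rewrite /step_cost /riccati qformD qform_conj -addrA lerD2l.
rewrite (completing_square _ _ pP.1 pR.1 (posdef_unit pS)) lerDl.
exact: (posdef_psd pS).2.
Qed.

Lemma riccati_qform_opt x :
  qform (riccati A B Q Rw P) x
  = step_cost x (- (invmx S *m B^T *m P *m (A *m x))).
Proof.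
rewrite /step_cost /riccati qformD qform_conj -addrA.
rewrite (completing_square _ _ pP.1 pR.1 (posdef_unit pS)).
by rewrite addNr qform0 addr0.
Qed.

End Variational.

Lemma riccati_mono (Q1 Q2 : 'M[R]_n) (R1 R2 : 'M_m) (P1 P2 : 'M_n) :
  Q1^T = Q1 -> loewner_le Q1 Q2 -> posdef R1 -> loewner_le R1 R2 -> psd P1 ->
  loewner_le P1 P2 ->
  loewner_le (riccati A B Q1 R1 P1) (riccati A B Q2 R2 P2).
Proof.
move=> sQ1 leQ pR1 leR pP1 leP.
have pR2 := posdef_loewner pR1 leR.
have pP2 := psd_loewner pP1 leP.
split.
  by rewrite trmxB !riccati_sym // ?pR1.1 ?pR2.1 ?pP1.1 ?pP2.1
    ?(sym_of_loewner leQ sQ1).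
move=> x; rewrite qformB subr_ge0 (riccati_qform_opt Q2 pR2 pP2).
set u := - _.
apply: le_trans (riccati_qform_le Q1 pR1 pP1 x u) _.
rewrite /step_cost.
have := leQ.2 x; have := leP.2 (A *m x + B *m u); have := leR.2 u.
rewrite !qformB; lra.
Qed.

End RiccatiStep.

End RiccatiMonotonicity.

Lemma backward_invariant (T : Type) (Inv : T -> Prop) (N : nat)
  (f : nat -> T -> T) (P : nat -> T) :
  Inv (P N) -> (forall t, (t < N)%N -> P t = f t (P t.+1)) ->
  (forall t X, (t < N)%N -> Inv X -> Inv (f t X)) ->
  forall t, (t <= N)%N -> Inv (P t).
Proof.
move=> invN defP step t le_tN.
have [k ->] : exists k, t = (N - k)%N by exists (N - t)%N; rewrite subKn.
elim: k => [|k IH]; first by rewrite subn0.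
have [le_Nk | lt_kN] := leqP N k.
  by rewrite (_ : (N - k.+1 = N - k)%N) //; lia.
have lt_tN : (N - k.+1 < N)%N by lia.
rewrite defP // (_ : (N - k.+1).+1 = N - k)%N; last by lia.
exact: step.
Qed.

Theorem lemma13 (R : rcfType) (n m : nat) (A : 'M[R]_n) (B : 'M[R]_(n, m))
  (mu_f mu_g l_f l_g : R)
  (Hmuf : 0 < mu_f) (Hmug : 0 < mu_g) (Hlf : 0 < l_f) (Hlg : 0 < l_g)
  (Pbar Plow : 'M[R]_n)
  (Hctrb : controllable A B)
  (HPbar : dare_sol A B (l_f%:M) (l_g%:M) Pbar)
  (HPlow : dare_sol A B (mu_f%:M) (mu_g%:M) Plow)
  (N : nat) (Qs : nat -> 'M[R]_n) (Rs : nat -> 'M[R]_m) (QN : 'M[R]_n)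
  (HQ : forall t, (t < N)%N -> in_interval (mu_f%:M) (l_f%:M) (Qs t))
  (HR : forall t, (t < N)%N -> in_interval (mu_g%:M) (l_g%:M) (Rs t))
  (HQN : in_interval Plow Pbar QN)
  (P : nat -> 'M[R]_n)
  (HPN : P N = QN)
  (HPt : forall t, (t < N)%N -> P t = riccati A B (Qs t) (Rs t) (P t.+1)) :
  forall t, (t <= N)%N -> in_interval Plow Pbar (P t).
Proof.
apply: (backward_invariant (f := fun t => riccati A B (Qs t) (Rs t))) => //.
  by rewrite HPN.
move=> t X lt_tN [lowX Xbar].
have [lowQ Qbar] := HQ t lt_tN; have [lowR Rbar] := HR t lt_tN.
have pPlow := posdef_psd HPlow.1.
have pRt := posdef_loewner (posdef_scalar _ Hmug) lowR.
split.
- (* Plow = ric(mu_f I, mu_g I, Plow) <= ric(Q_t, R_t, X) *)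
  have := riccati_mono A B (tr_scalar_mx _ _) lowQ (posdef_scalar _ Hmug) lowR
    pPlow lowX.
  by rewrite -HPlow.2.
- (* ric(Q_t, R_t, X) <= ric(l_f I, l_g I, Pbar) = Pbar *)
  have sQt := sym_of_loewner lowQ (tr_scalar_mx _ _).
  have := riccati_mono A B sQt Qbar pRt Rbar (psd_loewner pPlow lowX) Xbar.
  by rewrite -HPbar.2.
Qed.
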